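(* Let $\mathcal H$ be a complex Hilbert space with $\dim\mathcal H\ge n$, let $c=(c_1,\dots,c_n)$ and $\|A\|_c=\sum_{j=1}^n c_js_j(A)$ for $A\in\mathcal B(\mathcal H)$. For parts (a), (b), (c), (e) assume $c$ has positive entries arranged in descending order $c_1\ge\cdots\ge c_n>0$. (a) $\|\cdot\|_c$ is submultiplicative ($\|AB\|_c\le\|A\|_c\|B\|_c$ for all $A,B$) if and only if $c_1\ge1$. (b) $\|\cdot\|_c$ is a cross norm ($\|A\|_c=s_1(A)$ for every rank one $A$) if and only if $c_1=1$. (c) Suppose $c_1\ge1$. There exist nonzero $A,B\in\mathcal B(\mathcal H)$ with $\|AB\|_c=\|A\|_c\|B\|_c$ if and only if $c_1=1$. (d) Suppose $c=(1,0,\dots,0)$. Two nonzero operators $A,B\in\mathcal B(\mathcal H)$ satisfy $\|AB\|_c=\|A\|_c\|B\|_c$ if and only if $s_1(AB)=s_1(A)s_1(B)$. (e) Suppose $n\ge2$, $c_1=1$ and $c_2>0$. Two nonzero operators $A,B\in\mathcal B(\mathcal H)$ satisfy $\|AB\|_c=\|A\|_c\|B\|_c$ if and only if $A=xy^*$ and $B=yz^*$ for some nonzero vectors $x,y,z\in\mathcal H$.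
   Context: $\mathcal B(\mathcal H)$ is the algebra of bounded linear operators on $\mathcal H$; $s_k(A)=\inf\{\|A-X\|_{\rm sp}:\operatorname{rank}X<k\}$ is the $k$th singular value, with $\|\cdot\|_{\rm sp}$ the operator norm. $xy^*$ denotes the operator $v\mapsto\langle v,y\rangle x$. *)

From HB Require Import structures.
From mathcomp Require Import all_boot all_order all_algebra.
From mathcomp Require Import classical_sets reals complex.
Set Implicit Arguments. Unset Strict Implicit. Unset Printing Implicit Defensive.
Import Order.TTheory GRing.Theory Num.Theory.
Local Open Scope classical_set_scope.
Local Open Scope ring_scope.

Section HilbertDefs.
Variables (R : realType) (V : lmodType R[i]) (ip : V -> V -> R[i]).

Definition inner_product : Prop :=
  [/\ forall (a : R[i]) (u v w : V), ip (a *: u + v) w = a * ip u w + ip v w,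
      forall u v, ip u v = (ip v u)^*,
      forall v, 0 <= ip v v &
      forall v, ip v v = 0 -> v = 0].

Definition hnorm (v : V) : R := Num.sqrt (complex.Re (ip v v)).

Definition hcomplete : Prop :=
  forall u : nat -> V,
    (forall e : R, 0 < e -> exists N : nat, forall m k : nat,
        (N <= m)%N -> (N <= k)%N -> hnorm (u m - u k) < e) ->
    exists l : V, forall e : R, 0 < e -> exists N : nat, forall k : nat,
        (N <= k)%N -> hnorm (u k - l) < e.

Definition hdim_ge (n : nat) : Prop :=
  exists w : 'I_n -> V, forall a : 'I_n -> R[i],
    \sum_(i < n) a i *: w i = 0 -> forall i, a i = 0.

Definition bop (A : V -> V) : Prop :=
  (forall (a : R[i]) (u v : V), A (a *: u + v) = a *: A u + A v) /\
  exists M : R, forall v, hnorm (A v) <= M * hnorm v.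

Definition opnorm (A : V -> V) : R :=
  sup [set r | exists v, hnorm v <= 1 /\ r = hnorm (A v)].

Definition rank_le (A : V -> V) (m : nat) : Prop :=
  exists w : 'I_m -> V, forall v, exists a : 'I_m -> R[i],
    A v = \sum_(i < m) a i *: w i.

Definition nonzero_op (A : V -> V) : Prop := exists v, A v <> 0.

Definition rank_one (A : V -> V) : Prop := rank_le A 1 /\ nonzero_op A.

(* sv A k = s_{k+1}(A) = inf { ||A - X||_sp : X in B(H), rank X < k+1 } *)
Definition sv (A : V -> V) (k : nat) : R :=
  inf [set r | exists X : V -> V,
         [/\ bop X, rank_le X k & r = opnorm (fun v => A v - X v)]].

Definition cnorm (n : nat) (c : 'I_n -> R) (A : V -> V) : R :=
  \sum_(j < n) c j * sv A j.

Definition outer (x y : V) : V -> V := fun v => ip v y *: x.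

End HilbertDefs.

(* A rank-one operator x y^* has s_1 = |x| |y| and s_j = 0 for j >= 2, so
   ||x y^*||_c = c_1 |x| |y|; testing with P = e e^* for some e <> 0 gives the
   necessity in (a) and (b) and the example in (c), while in (d) ||.||_c = s_1.
   The bounds s_j(AB) <= ||A|| s_j(B) and s_j(AB) <= s_j(A) ||B|| give
   ||AB||_c <= ||A|| ||B||_c <= c_1 ||A|| ||B||_c <= ||A||_c ||B||_c when c_1 >= 1,
   and the middle step is strict for nonzero A, B when c_1 > 1.
   In (e), equality squeezes ||A||_c = ||A|| + c_2 s_2(A) + ... down to ||A||, so
   s_2(A) = 0, and likewise s_2(B) = 0. If s_2 vanishes, the rank is at most one:
   otherwise it maps two vectors onto an orthonormal pair, and every rank-one
   operator stays a fixed positive distance away from it. By the Riesz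
   representation theorem, which follows from completeness through the closest
   point of the kernel, a bounded rank-one operator is some x y^*. For A = x y^*
   and B = u z^*, equality reduces to |<u, y>| = |u| |y|, so u is a multiple of y. *)

From HB Require Import structures.
From mathcomp Require Import all_boot all_order all_algebra.
From mathcomp Require Import classical_sets boolp reals complex.
From mathcomp Require Import ring lra.
Import Order.TTheory GRing.Theory Num.Theory.
Local Open Scope classical_set_scope.
Local Open Scope ring_scope.

Local Notation cmod := (@Normc.normc _).

Section ComplexModulus.
Context {R : realType}.
Implicit Types z w : R[i].

Lemma cmod_ge0 z : 0 <= cmod z.
Proof. by case: z => a b; apply: sqrtr_ge0. Qed.

Lemma cmod_real (a : R) : cmod a%:C%C = `|a|.
Proof. by rewrite /Normc.normc /= expr0n addr0 sqrtr_sqr. Qed.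

Lemma mul_conjc z : z * z^* = (cmod z ^+ 2)%:C%C.
Proof.
case: z => a b; rewrite /Normc.normc sqr_sqrtr ?addr_ge0 ?sqr_ge0 //.
by apply/eqP; rewrite eq_complex /=; apply/andP; split; apply/eqP; ring.
Qed.

Lemma cmodM z w : cmod (z * w) = cmod z * cmod w.
Proof. exact: Normc.normcM. Qed.

Lemma cmodN z : cmod (- z) = cmod z.
Proof. exact: normcN. Qed.

Lemma Re_le_cmod z : complex.Re z <= cmod z.
Proof.
case: z => a b /=; apply: le_trans (ler_norm a) _.
by rewrite -sqrtr_sqr ler_sqrt ?addr_ge0 ?sqr_ge0 // lerDl sqr_ge0.
Qed.

End ComplexModulus.

Lemma invS_lt_eventually {R : realType} {x : R} : 0 < x ->
  exists N, forall m, (N <= m)%N -> m.+1%:R^-1 < x.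
Proof.
move=> x0; have [N hN] := ltr_add_invr x0; exists N => m Nm.
by apply: le_lt_trans hN; rewrite add0r lef_pV2 ?posrE ?ltr0n // ler_nat ltnS.
Qed.

Section InnerProduct.
Context {R : realType} {V : lmodType R[i]} {ip : V -> V -> R[i]}.
Hypothesis Hip : inner_product ip.
Implicit Types u v w : V.

Local Notation nsq v := (complex.Re (ip v v)).
Local Notation hnm := (hnorm ip).
Local Notation pcoef u v := ((nsq v)^-1%:C * ip u v)%C.
Local Notation midpoint a b := ((2^-1 : R)%:C%C *: (a + b)).

Lemma ipL a u v w : ip (a *: u + v) w = a * ip u w + ip v w.
Proof. by case: Hip. Qed.

Lemma ipC u v : ip u v = (ip v u)^*.
Proof. by case: Hip. Qed.

Lemma ip0l w : ip 0 w = 0.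
Proof.
have := ipL 1 0 0 w; rewrite scale1r addr0 mul1r => h.
by apply: (addrI (ip 0 w)); rewrite addr0 -h.
Qed.

Lemma ipDl u v w : ip (u + v) w = ip u w + ip v w.
Proof. by rewrite -[u]scale1r ipL mul1r scale1r. Qed.

Lemma ipZl a u w : ip (a *: u) w = a * ip u w.
Proof. by rewrite -[a *: u]addr0 ipL ip0l addr0. Qed.

Lemma ipNl u w : ip (- u) w = - ip u w.
Proof. by rewrite -scaleN1r ipZl mulN1r. Qed.

Lemma ipBl u v w : ip (u - v) w = ip u w - ip v w.
Proof. by rewrite ipDl ipNl. Qed.

Lemma ip0r w : ip w 0 = 0.
Proof. by rewrite ipC ip0l conjC0. Qed.

Lemma ipDr u v w : ip w (u + v) = ip w u + ip w v.
Proof. by rewrite ipC ipDl rmorphD /= -!ipC. Qed.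

Lemma ipZr a u w : ip w (a *: u) = a^* * ip w u.
Proof. by rewrite ipC ipZl rmorphM /= -ipC. Qed.

Lemma ipNr u w : ip w (- u) = - ip w u.
Proof. by rewrite ipC ipNl rmorphN /= -ipC. Qed.

Lemma ip_real v : ip v v = (nsq v)%:C%C.
Proof.
by case: Hip => _ _ /(_ v); case: (ip v v) => a b; rewrite lecE /= => /andP [/eqP -> _].
Qed.

Lemma nsq_ge0 v : 0 <= nsq v.
Proof. by case: Hip => _ _ /(_ v); rewrite lecE => /andP [_]. Qed.

Lemma nsq_eq0 v : nsq v = 0 -> v = 0.
Proof. by move=> h; case: Hip => _ _ _; apply; rewrite ip_real h. Qed.

Lemma hnorm_ge0 v : 0 <= hnm v.
Proof. exact: sqrtr_ge0. Qed.

Lemma hnorm_sqr v : hnm v ^+ 2 = nsq v.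
Proof. by rewrite sqr_sqrtr // nsq_ge0. Qed.

Lemma hnorm_eq0 v : hnm v = 0 -> v = 0.
Proof. by move=> h; apply: nsq_eq0; rewrite -hnorm_sqr h expr0n. Qed.

Lemma hnorm0 : hnm 0 = 0.
Proof. by rewrite /hnorm ip0l sqrtr0. Qed.

Lemma hnorm_gt0 {v} : v <> 0 -> 0 < hnm v.
Proof. by move=> nz; rewrite lt_def hnorm_ge0 andbT; apply/eqP => /hnorm_eq0. Qed.

Lemma nsq_gt0 {v} : v <> 0 -> 0 < nsq v.
Proof. by move/hnorm_gt0 => h; rewrite -hnorm_sqr exprn_gt0. Qed.

Lemma nsqZ a v : nsq (a *: v) = cmod a ^+ 2 * nsq v.
Proof. by rewrite ipZl ipZr mulrA mul_conjc ip_real -rmorphM. Qed.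

Lemma hnormZ a v : hnm (a *: v) = cmod a * hnm v.
Proof. by rewrite /hnorm nsqZ sqrtrM ?sqr_ge0 // sqrtr_sqr ger0_norm ?cmod_ge0. Qed.

Lemma hnormZ_real (a : R) v : 0 <= a -> hnm (a%:C%C *: v) = a * hnm v.
Proof. by move=> a0; rewrite hnormZ cmod_real ger0_norm. Qed.

Lemma nsq_normalize v : v <> 0 -> nsq ((hnm v)^-1%:C%C *: v) = 1.
Proof.
move=> /hnorm_gt0 vp; rewrite nsqZ cmod_real ger0_norm ?invr_ge0 ?hnorm_ge0 //.
by rewrite -hnorm_sqr -exprMn mulVf ?gt_eqF // expr1n.
Qed.

Lemma cmod_ip_self v : cmod (ip v v) = hnm v ^+ 2.
Proof. by rewrite ip_real cmod_real ger0_norm ?nsq_ge0 // hnorm_sqr. Qed.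

Lemma nsqD u v : nsq (u + v) = nsq u + nsq v + 2 * complex.Re (ip u v).
Proof.
rewrite !ipDl !ipDr [ip v u]ipC.
case: (ip u u) (ip v v) (ip u v) => [a b] [c d] [e f] /=; lra.
Qed.

Lemma nsqB_proj u v : v <> 0 ->
  nsq (u - pcoef u v *: v) = nsq u - cmod (ip u v) ^+ 2 / nsq v.
Proof.
move=> /nsq_gt0 sp.
rewrite -scaleNr nsqD nsqZ ipZr rmorphN rmorphM /= conj_Creal; last first.
  by apply/complex_realP; exists (nsq v)^-1.
rewrite cmodN cmodM cmod_real ger0_norm ?invr_ge0 ?ltW // mulNr -mulrA [_^* * _]mulrC.
by rewrite mul_conjc -rmorphM /=; field; rewrite gt_eqF.
Qed.

Lemma cauchy_schwarz u v : cmod (ip u v) <= hnm u * hnm v.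
Proof.
have [->|/eqP v_nz] := eqVneq v 0; first by rewrite ip0r Normc.normc0 hnorm0 mulr0.
have := nsq_ge0 (u - pcoef u v *: v); rewrite nsqB_proj // subr_ge0.
rewrite ler_pdivrMr ?nsq_gt0 // -!hnorm_sqr -exprMn => h.
by rewrite -ler_sqr ?nnegrE ?cmod_ge0 ?mulr_ge0 ?hnorm_ge0.
Qed.

Lemma cauchy_schwarz_eq {u v} : v <> 0 -> cmod (ip u v) = hnm u * hnm v ->
  u = pcoef u v *: v.
Proof.
move=> nz e; apply/eqP; rewrite -subr_eq0; apply/eqP; apply: nsq_eq0.
by rewrite nsqB_proj // e exprMn !hnorm_sqr mulfK ?subrr // gt_eqF ?nsq_gt0.
Qed.

Lemma hnormD u v : hnm (u + v) <= hnm u + hnm v.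
Proof.
rewrite -ler_sqr ?nnegrE ?addr_ge0 ?hnorm_ge0 // hnorm_sqr nsqD sqrrD !hnorm_sqr.
have := Re_le_cmod (ip u v); have := cauchy_schwarz u v; lra.
Qed.

Lemma parallelogram u v : nsq (u + v) + nsq (u - v) = 2 * nsq u + 2 * nsq v.
Proof.
rewrite !nsqD ipNl !ipNr opprK.
case: (ip u u) (ip v v) (ip u v) => [a b] [c d] [e f] /=; lra.
Qed.

Lemma half_sum_sub v0 a b :
  v0 - midpoint a b = (2^-1 : R)%:C%C *: ((v0 - a) + (v0 - b)).
Proof.
rewrite addrACA -opprD scalerBr; congr (_ - _).
have half2 : (2^-1 + 2^-1 : R) = 1 by lra.
by rewrite scalerDr -scalerDl -rmorphD /= half2 rmorph1 scale1r.
Qed.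

Lemma apollonius v0 a b :
  nsq (a - b) + 4 * nsq (v0 - midpoint a b) =
  2 * nsq (v0 - a) + 2 * nsq (v0 - b).
Proof.
have -> : a - b = (v0 - b) - (v0 - a) by rewrite opprB [in RHS]addrC subrKA.
rewrite half_sum_sub nsqZ cmod_real ger0_norm ?invr_ge0 ?ler0n // mulrA.
rewrite (_ : 4 * 2^-1 ^+ 2 = 1) ?mul1r; last by field.
rewrite [(v0 - a) + _]addrC; have := parallelogram (v0 - b) (v0 - a); lra.
Qed.

Lemma min_norm_orthogonal z k : (forall t, hnm z <= hnm (z - t *: k)) -> ip z k = 0.
Proof.
move=> zmin; have [->|/eqP k_nz] := eqVneq k 0; first exact: ip0r.
have := zmin (pcoef z k).
rewrite -ler_sqr ?nnegrE ?hnorm_ge0 // !hnorm_sqr nsqB_proj // lerDl oppr_ge0.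
rewrite pmulr_lle0 ?invr_gt0 ?nsq_gt0 // => h.
by apply: Normc.eq0_normc; apply/eqP; rewrite -sqrf_eq0 eq_le h sqr_ge0.
Qed.

Section BoundedOperators.
Implicit Types A B X : V -> V.

Lemma bopZD {A} : bop ip A -> forall a u v, A (a *: u + v) = a *: A u + A v.
Proof. by case. Qed.

Lemma bop0 {A} : bop ip A -> A 0 = 0.
Proof.
move=> hA; have := bopZD hA 1 0 0; rewrite !scale1r addr0 => h.
by apply: (addrI (A 0)); rewrite addr0 -h.
Qed.

Lemma bopD {A} : bop ip A -> forall u v, A (u + v) = A u + A v.
Proof. by move=> hA u v; rewrite -[u]scale1r bopZD // !scale1r. Qed.

Lemma bopZ {A} : bop ip A -> forall a u, A (a *: u) = a *: A u.
Proof. by move=> hA a u; rewrite -[a *: u]addr0 bopZD // bop0 // addr0. Qed.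

Lemma bopB {A} : bop ip A -> forall u v, A (u - v) = A u - A v.
Proof. by move=> hA u v; rewrite bopD // -scaleN1r bopZ // scaleN1r. Qed.

Lemma bop_sum {A} : bop ip A -> forall (m : nat) (F : 'I_m -> V),
  A (\sum_(i < m) F i) = \sum_(i < m) A (F i).
Proof.
move=> hA m F; elim/big_rec2: _ => [|i x y _ <-]; first exact: bop0.
exact: bopD.
Qed.

Lemma bop_zero : bop ip (fun _ => 0).
Proof.
split; first by move=> a u v; rewrite scaler0 addr0.
by exists 0 => v; rewrite hnorm0 mul0r.
Qed.

Lemma opnorm_ge0 A : 0 <= opnorm ip A.
Proof.
rewrite /opnorm; set S := [set _ | _].
have [ub|nub] := pselect (has_ubound S); last by rewrite sup_out // => -[_].
apply: le_trans (hnorm_ge0 (A 0)) _; apply: ub_le_sup => //.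
by exists 0; rewrite hnorm0.
Qed.

Lemma opnorm_le A M : 0 <= M -> (forall v, hnm (A v) <= M * hnm v) ->
  opnorm ip A <= M.
Proof.
move=> M0 h; apply: ge_sup; first by exists (hnm (A 0)), 0; rewrite hnorm0 ler01.
move=> r [v [v1 ->]]; apply: le_trans (h v) _.
by rewrite -[leRHS]mulr1 ler_wpM2l.
Qed.

Lemma opnorm_bound {A} v : bop ip A -> hnm (A v) <= opnorm ip A * hnm v.
Proof.
move=> hA; have [->|/eqP/hnorm_gt0 vp] := eqVneq v 0.
  by rewrite bop0 // hnorm0 mulr0.
have ub : has_ubound [set r | exists v, hnm v <= 1 /\ r = hnm (A v)].
  case: hA => _ [M hM]; exists `|M| => _ [u [u1 ->]].
  apply: le_trans (hM u) (le_trans (ler_norm _) _).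
  by rewrite normrM [`|hnm u|]ger0_norm ?hnorm_ge0 // ler_piMr.
have hw : hnm ((hnm v)^-1%:C%C *: v) <= 1.
  by rewrite hnormZ_real ?invr_ge0 ?hnorm_ge0 // mulVf ?gt_eqF.
have := ub_le_sup ub (ex_intro _ _ (conj hw erefl)).
rewrite bopZ // hnormZ_real ?invr_ge0 ?hnorm_ge0 // -/(opnorm ip A).
by rewrite mulrC ler_pdivrMr.
Qed.

Lemma opnorm_gt0 {A} : bop ip A -> nonzero_op A -> 0 < opnorm ip A.
Proof.
move=> hA [v /hnorm_gt0 Av]; have := opnorm_bound v hA.
have := hnorm_ge0 v; have := opnorm_ge0 A; nra.
Qed.

Lemma bop_comp {A B} : bop ip A -> bop ip B -> bop ip (fun v => A (B v)).
Proof.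
move=> hA hB; split; first by move=> a u v; rewrite !bopZD.
exists (opnorm ip A * opnorm ip B) => v.
apply: le_trans (opnorm_bound _ hA) _.
by rewrite -mulrA ler_wpM2l ?opnorm_ge0 ?opnorm_bound.
Qed.

Lemma opnorm_comp {A B} : bop ip A -> bop ip B ->
  opnorm ip (fun v => A (B v)) <= opnorm ip A * opnorm ip B.
Proof.
move=> hA hB; apply: opnorm_le => [|v]; first by rewrite mulr_ge0 ?opnorm_ge0.
apply: le_trans (opnorm_bound _ hA) _.
by rewrite -mulrA ler_wpM2l ?opnorm_ge0 ?opnorm_bound.
Qed.

Lemma bop_sub {A B} : bop ip A -> bop ip B -> bop ip (fun v => A v - B v).
Proof.
move=> hA hB; split.
  by move=> a u v; rewrite (bopZD hA) (bopZD hB) scalerBr opprD addrACA !addrA.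
exists (opnorm ip A + opnorm ip B) => v.
apply: le_trans (_ : _ <= hnm (A v) + hnm (- B v)) _; first exact: hnormD.
by rewrite -scaleN1r hnormZ cmodN Normc.normc1 mul1r mulrDl lerD ?opnorm_bound.
Qed.

End BoundedOperators.

Section SingularValues.
Implicit Types A B X : V -> V.

Lemma rank_zero k : rank_le (fun _ : V => 0) k.
Proof.
exists (fun _ => 0) => v; exists (fun _ => 0).
by rewrite big1 // => i _; rewrite scaler0.
Qed.

Lemma rank1P X : rank_le X 1 <-> exists w, forall v, exists a, X v = a *: w.
Proof.
split=> [[w h]|[w h]]; first exists (w ord0).
  by move=> v; have [a ->] := h v; exists (a ord0); rewrite big_ord1.
by exists (fun _ => w) => v; have [a ->] := h v; exists (fun _ => a); rewrite big_ord1.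
Qed.

Lemma rank1_le X k : (0 < k)%N -> rank_le X 1 -> rank_le X k.
Proof.
case: k => // k _ /rank1P [w h].
exists (fun i => if val i == 0%N then w else 0) => v; have [a ->] := h v.
exists (fun i => if val i == 0%N then a else 0).
by rewrite big_ord_recl /= big1 ?addr0 // => i _; rewrite scaler0.
Qed.

Lemma rank_compl A X k : bop ip A -> rank_le X k -> rank_le (fun v => A (X v)) k.
Proof.
move=> hA [w h]; exists (fun i => A (w i)) => v; have [a ->] := h v.
by exists a; rewrite bop_sum //; apply: eq_bigr => i _; apply: bopZ.
Qed.

Lemma rank_compr X B k : rank_le X k -> rank_le (fun v => X (B v)) k.
Proof. by case=> w h; exists w => v; apply: h. Qed.

Lemma sv_le {A X k} : bop ip X -> rank_le X k ->
  sv ip A k <= opnorm ip (fun v => A v - X v).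
Proof.
move=> hX rX; apply: ge_inf; last by exists X.
by exists 0 => _ [Y [_ _ ->]]; apply: opnorm_ge0.
Qed.

Lemma sv_ge A k m :
  (forall X, bop ip X -> rank_le X k -> m <= opnorm ip (fun v => A v - X v)) ->
  m <= sv ip A k.
Proof.
move=> h; apply: lb_le_inf => [|_ [X [hX rX ->]]]; last exact: h.
exists (opnorm ip (fun v => A v - 0)), (fun _ => 0).
by split; [exact: bop_zero | exact: rank_zero |].
Qed.

Lemma sv_ge0 A k : 0 <= sv ip A k.
Proof. by apply: sv_ge => X _ _; apply: opnorm_ge0. Qed.

Lemma sv0 A : sv ip A 0 = opnorm ip A.
Proof.
have AX X : rank_le X 0 -> (fun v => A v - X v) = A.
  by case=> w h; apply: funext => v; have [a ->] := h v; rewrite big_ord0 subr0.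
apply/eqP; rewrite eq_le; apply/andP; split; last by apply: sv_ge => X _ rX; rewrite AX.
by have := @sv_le A _ 0 bop_zero (rank_zero 0); rewrite AX //; apply: rank_zero.
Qed.

Lemma sv_rank A k : bop ip A -> rank_le A k -> sv ip A k = 0.
Proof.
move=> hA rA; apply/eqP; rewrite eq_le sv_ge0 andbT.
apply: le_trans (sv_le hA rA) _; apply: opnorm_le => // v.
by rewrite subrr hnorm0 mul0r.
Qed.

Lemma sv_le_scale C B k (a : R) : 0 <= a ->
  (forall X, bop ip X -> rank_le X k -> exists2 Y, bop ip Y /\ rank_le Y k &
     opnorm ip (fun v => C v - Y v) <= a * opnorm ip (fun v => B v - X v)) ->
  sv ip C k <= a * sv ip B k.
Proof.
move=> a0 h; have [a_eq0|ap] := eqVneq a 0.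
  have [Y [hY rY] CY] := h _ bop_zero (rank_zero k).
  rewrite a_eq0 mul0r in CY; rewrite a_eq0 mul0r.
  exact: le_trans (sv_le hY rY) CY.
have {}ap : 0 < a by rewrite lt_def ap.
rewrite mulrC -ler_pdivrMr //; apply: sv_ge => X hX rX.
have [Y [hY rY] le_CY] := h X hX rX.
by rewrite ler_pdivrMr // mulrC; apply: le_trans le_CY; apply: sv_le.
Qed.

Lemma sv_compl A B k : bop ip A -> bop ip B ->
  sv ip (fun v => A (B v)) k <= opnorm ip A * sv ip B k.
Proof.
move=> hA hB; apply: sv_le_scale; first exact: opnorm_ge0.
move=> X hX rX; exists (fun v => A (X v)); first by split; [apply: bop_comp|apply: rank_compl].
have -> : (fun v => A (B v) - A (X v)) = (fun v => A (B v - X v)).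
  by apply: funext => v; rewrite bopB.
exact: opnorm_comp hA (bop_sub hB hX).
Qed.

Lemma sv_compr A B k : bop ip A -> bop ip B ->
  sv ip (fun v => A (B v)) k <= sv ip A k * opnorm ip B.
Proof.
move=> hA hB; rewrite mulrC; apply: sv_le_scale; first exact: opnorm_ge0.
move=> X hX rX; exists (fun v => X (B v)); first by split; [apply: bop_comp|apply: rank_compr].
by rewrite mulrC; exact: opnorm_comp (bop_sub hA hX) hB.
Qed.

End SingularValues.

Section RankOne.
Implicit Types A B X : V -> V.

Lemma outer_bop x y : bop ip (outer ip x y).
Proof.
split=> [a u v|]; first by rewrite /outer ipL scalerDl scalerA.
exists (hnm y * hnm x) => v; rewrite /outer hnormZ mulrAC ler_wpM2r ?hnorm_ge0 //.
by rewrite mulrC cauchy_schwarz.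
Qed.

Lemma outer_rank1 x y : rank_le (outer ip x y) 1.
Proof. by apply/rank1P; exists x => v; exists (ip v y). Qed.

Lemma opnorm_outer x y : opnorm ip (outer ip x y) = hnm x * hnm y.
Proof.
apply/eqP; rewrite eq_le; apply/andP; split.
  apply: opnorm_le => [|v]; first by rewrite mulr_ge0 ?hnorm_ge0.
  rewrite /outer hnormZ mulrC -mulrA ler_wpM2l ?hnorm_ge0 //.
  by rewrite mulrC cauchy_schwarz.
have [->|/eqP/hnorm_gt0 yp] := eqVneq y 0; first by rewrite hnorm0 mulr0 opnorm_ge0.
have := opnorm_bound y (outer_bop x y).
rewrite /outer hnormZ cmod_ip_self.
by rewrite expr2 mulrAC ler_pM2r // mulrC.
Qed.

Lemma outer_comp x y u z :
  (fun v => outer ip x y (outer ip u z v)) = outer ip (ip u y *: x) z.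
Proof. by apply: funext => v; rewrite /outer ipZl scalerA. Qed.

Lemma outerZl a x y : outer ip (a *: x) y = outer ip x (a^* *: y).
Proof. by apply: funext => v; rewrite /outer ipZr conjCK scalerA mulrC. Qed.

Lemma outer_nonzero {x y} : x <> 0 -> y <> 0 -> nonzero_op (outer ip x y).
Proof.
move=> /eqP x_nz y_nz; exists y; apply/eqP.
by rewrite /outer scaler_eq0 negb_or x_nz andbT ip_real; apply/eqP => -[] /nsq_eq0.
Qed.

Lemma nonzero_outer x y : nonzero_op (outer ip x y) -> x <> 0 /\ y <> 0.
Proof.
by case=> v Av; split=> h0; apply: Av; rewrite /outer h0 ?scaler0 // ip0r scale0r.
Qed.

Lemma not_rank1_orthonormal {A} : bop ip A -> ~ rank_le A 1 ->
  exists e1 e2, [/\ nsq (A e1) = 1, nsq (A e2) = 1 & ip (A e1) (A e2) = 0].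
Proof.
move=> hA not_r1.
have [v1 a_nz] : exists v1, A v1 <> 0.
  apply: contrapT => /forallNP A0; apply: not_r1; apply/rank1P; exists 0 => v.
  by exists 0; rewrite scale0r; apply: contrapT (A0 v).
set a := A v1 in a_nz *.
have [v2 not_par] : exists v2, forall al, A v2 <> al *: a.
  apply: contrapT => /forallNP par; apply: not_r1; apply/rank1P; exists a => v.
  by apply: contrapT => /forallNP; apply: par.
set t := pcoef (A v2) a.
set b := A v2 - t *: a.
have b_nz : b <> 0 by move/eqP; rewrite subr_eq0 => /eqP /not_par.
have ba : ip b a = 0.
  rewrite ipBl ipZl ip_real mulrAC -rmorphM /= mulVf ?mul1r ?subrr //.
  by rewrite gt_eqF ?nsq_gt0.
have Ae1 : A ((hnm a)^-1%:C%C *: v1) = (hnm a)^-1%:C%C *: a by rewrite bopZ.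
have Ae2 : A ((hnm b)^-1%:C%C *: (v2 - t *: v1)) = (hnm b)^-1%:C%C *: b.
  by rewrite bopZ // bopB // bopZ.
exists ((hnm a)^-1%:C%C *: v1), ((hnm b)^-1%:C%C *: (v2 - t *: v1)).
rewrite Ae1 Ae2 !nsq_normalize //.
by split=> //; rewrite ipZl ipZr ipC ba conjC0 !mulr0.
Qed.

Lemma singular2_dist_id (P Q S T : R[i]) (r : R) :
  cmod (1 - P) <= r -> cmod Q <= r -> cmod S <= r -> cmod (1 - T) <= r ->
  P * T = Q * S -> 1 / 2 <= r.
Proof.
move=> hP hQ hS hT PTQS.
have cmod_one_sub z : cmod (1 - z) <= r -> 1 - r <= cmod z.
  by move=> h; have := le_normcD (1 - z) z; rewrite subrK Normc.normc1; lra.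
have {}hP := cmod_one_sub _ hP; have {}hT := cmod_one_sub _ hT.
have r0 : 0 <= r := le_trans (cmod_ge0 Q) hQ.
rewrite leNgt; apply/negP => r_lt.
have : (1 - r) * (1 - r) <= r * r.
  apply: le_trans (_ : _ <= cmod P * cmod T) _; first by apply: ler_pM => //; lra.
  by rewrite -cmodM PTQS cmodM ler_pM ?cmod_ge0.
nra.
Qed.

Lemma sv1_lb_orthonormal A X e1 e2 : bop ip A -> bop ip X -> rank_le X 1 ->
  nsq (A e1) = 1 -> nsq (A e2) = 1 -> ip (A e1) (A e2) = 0 ->
  1 / 2 <= opnorm ip (fun v => A v - X v) * (hnm e1 + hnm e2).
Proof.
move=> hA hX /rank1P [w hw]; set p := A e1; set q := A e2 => np nq pq.
have [al hal] := hw e1; have [be hbe] := hw e2.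
set E := opnorm ip (fun v => A v - X v) * (hnm e1 + hnm e2).
have hnp : hnm p = 1 by rewrite /hnorm np sqrtr1.
have hnq : hnm q = 1 by rewrite /hnorm nq sqrtr1.
have qp : ip q p = 0 by rewrite ipC pq conjC0.
have bound e : hnm e <= hnm e1 + hnm e2 -> hnm (A e - X e) <= E.
  move=> le_e; apply: le_trans (opnorm_bound e (bop_sub hA hX)) _.
  by rewrite ler_wpM2l ?opnorm_ge0.
have b1 : hnm (p - al *: w) <= E by rewrite -hal bound // lerDl hnorm_ge0.
have b2 : hnm (q - be *: w) <= E by rewrite -hbe bound // lerDr hnorm_ge0.
have coeff z u : hnm z <= E -> hnm u = 1 -> cmod (ip z u) <= E.
  by move=> zE u1; apply: le_trans (cauchy_schwarz z u) _; rewrite u1 mulr1.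
(* Compressed to [p, q], [A] is the identity and [X] is the singular matrix
   with rows [al * (<w, p>, <w, q>)] and [be * (<w, p>, <w, q>)]. *)
apply: (@singular2_dist_id (al * ip w p) (al * ip w q) (be * ip w p) (be * ip w q)).
- by have := coeff _ _ b1 hnp; rewrite ipBl ipZl ip_real np.
- by have := coeff _ _ b1 hnq; rewrite ipBl ipZl pq sub0r cmodN.
- by have := coeff _ _ b2 hnp; rewrite ipBl ipZl qp sub0r cmodN.
- by have := coeff _ _ b2 hnq; rewrite ipBl ipZl ip_real nq.
- by rewrite mulrACA [ip w p * _]mulrC mulrACA.
Qed.

Lemma sv1_eq0_rank1 {A} : bop ip A -> sv ip A 1 = 0 -> rank_le A 1.
Proof.
move=> hA sv1_0; apply: contrapT => /(not_rank1_orthonormal hA) [e1 [e2 [n1 n2 o12]]].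
have e1_nz : e1 <> 0.
  move=> e1_0; have : hnm (A e1) = 1 by rewrite /hnorm n1 sqrtr1.
  by rewrite e1_0 bop0 // hnorm0 => /eqP; rewrite eq_sym oner_eq0.
have m_gt0 : 0 < hnm e1 + hnm e2.
  by have := hnorm_gt0 e1_nz; have := hnorm_ge0 e2; lra.
have : (1 / 2) / (hnm e1 + hnm e2) <= sv ip A 1.
  by apply: sv_ge => X hX rX; rewrite ler_pdivrMr //; apply: sv1_lb_orthonormal.
by rewrite sv1_0 ler_pdivrMr // mul0r; lra.
Qed.

End RankOne.

Section LinearFunctional.
Context {f : V -> R[i]}.
Hypothesis f_lin : forall a u v, f (a *: u + v) = a * f u + f v.

Lemma lfun0 : f 0 = 0.
Proof.
have := f_lin 1 0 0; rewrite scale1r addr0 mul1r => h.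
by apply: (addrI (f 0)); rewrite addr0 -h.
Qed.

Lemma lfunZ a u : f (a *: u) = a * f u.
Proof. by rewrite -[a *: u]addr0 f_lin lfun0 addr0. Qed.

Lemma lfunD u v : f (u + v) = f u + f v.
Proof. by rewrite -[u]scale1r f_lin mul1r scale1r. Qed.

Lemma lfunB u v : f (u - v) = f u - f v.
Proof. by rewrite lfunD -scaleN1r lfunZ mulN1r. Qed.

Lemma orthogonal_kernel_repr z : f z != 0 -> (forall k, f k = 0 -> ip z k = 0) ->
  forall v, f v = ip v (((nsq z)^-1%:C * (f z)^*)%C *: z).
Proof.
move=> fz orth v; set k := v - (f v / f z) *: z.
have fk : f k = 0 by rewrite lfunB lfunZ divfK // subrr.
have ip_vz : ip v z = f v / f z * (nsq z)%:C%C.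
  apply/eqP; rewrite -subr_eq0 -ip_real -ipZl -ipBl -/k.
  by rewrite ipC orth // conjC0.
have z_nz : (nsq z)%:C%C != 0 :> R[i].
  by apply/eqP => -[] /nsq_eq0 z0; move: fz; rewrite z0 lfun0 eqxx.
rewrite ipZr rmorphM /= conjCK conj_Creal; last by apply/complex_realP; exists (nsq z)^-1.
by rewrite ip_vz fmorphV /=; field; apply/andP.
Qed.

End LinearFunctional.

Definition cauchy_seq (u : nat -> V) : Prop := forall e, 0 < e ->
  exists N, forall m k, (N <= m)%N -> (N <= k)%N -> hnm (u m - u k) < e.

Definition converges_to (u : nat -> V) (l : V) : Prop := forall e, 0 < e ->
  exists N, forall k, (N <= k)%N -> hnm (u k - l) < e.

Section Riesz.
Hypothesis Hcomp : hcomplete ip.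

Section ClosestPoint.
Context {K : set V}.
Hypothesis K_mid : forall a b, K a -> K b -> K (midpoint a b).

Lemma minimizing_cauchy {v0} {d : R} {ks : nat -> V} :
  0 <= d -> (forall k, K k -> d <= hnm (v0 - k)) ->
  (forall m, K (ks m)) -> (forall m, hnm (v0 - ks m) < d + m.+1%:R^-1) ->
  cauchy_seq ks.
Proof.
move=> d0 dK Kks ks_lt e e0.
have excess m : nsq (v0 - ks m) - d ^+ 2 <= (2 * d + 1) * m.+1%:R^-1.
  rewrite -hnorm_sqr; set x := hnm _; set r := m.+1%:R^-1.
  have r_le1 : r <= 1 by rewrite invr_le1 ?unitfE ?pnatr_eq0 ?ltr0n ?ler1n.
  have x_lt : x < d + r := ks_lt m.
  have d_le : d <= x := dK _ (Kks m).
  have : (x - d) * (x + d) <= r * (2 * d + 1) by apply: ler_pM; lra.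
  nra.
have mid m k :
    nsq (ks m - ks k) <= 2 * (nsq (v0 - ks m) - d ^+ 2) + 2 * (nsq (v0 - ks k) - d ^+ 2).
  have := apollonius v0 (ks m) (ks k).
  have := dK _ (K_mid _ _ (Kks m) (Kks k)); rewrite -(ler_sqr d0) ?nnegrE ?hnorm_ge0 //.
  rewrite hnorm_sqr; lra.
set c := 2 * d + 1; have c0 : 0 < c by rewrite /c; lra.
have [N hN] := invS_lt_eventually (divr_gt0 (exprn_gt0 2 e0) (mulr_gt0 (ltr0n _ 4) c0)).
exists N => m k Nm Nk; rewrite -ltr_sqr ?nnegrE ?hnorm_ge0 ?ltW // hnorm_sqr.
have := hN m Nm; have := hN k Nk; rewrite !ltr_pdivlMr ?mulr_gt0 //.
have := mid m k; have := excess m; have := excess k; rewrite -/c.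
set rm := m.+1%:R^-1; set rk := k.+1%:R^-1; nra.
Qed.

Hypothesis K_closed : forall (u : nat -> V) l, (forall m, K (u m)) -> converges_to u l -> K l.

Lemma closest_point v0 : K !=set0 ->
  exists2 k0, K k0 & forall k, K k -> hnm (v0 - k0) <= hnm (v0 - k).
Proof.
move=> [k1 Kk1]; set S := [set hnm (v0 - k) | k in K].
have S0 : S !=set0 by exists (hnm (v0 - k1)), k1.
have Slb : has_lbound S by exists 0 => _ [k _ <-]; apply: hnorm_ge0.
set d := inf S.
have dK k : K k -> d <= hnm (v0 - k) by move=> Kk; apply: ge_inf => //; exists k.
have d0 : 0 <= d by apply: lb_le_inf => // _ [k _ <-]; apply: hnorm_ge0.
have near m : exists k, K k /\ hnm (v0 - k) < d + m.+1%:R^-1.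
  have : inf S < d + m.+1%:R^-1 by rewrite ltrDl invr_gt0 ltr0n.
  by move/(inf_lt S0) => [_ [k Kk <-] lt]; exists k.
have [ks hks] := choice near.
have Kks m : K (ks m) := (hks m).1.
have [k0 ks_k0] := Hcomp ks (minimizing_cauchy d0 dK Kks (fun m => (hks m).2)).
exists k0; first exact: K_closed _ _ Kks ks_k0.
move=> k Kk; apply: le_trans (dK k Kk); apply/ler_addgt0Pr => e e0.
have [N1 hN1] := ks_k0 _ (divr_gt0 e0 (ltr0n _ 2)).
have [N2 hN2] := invS_lt_eventually (divr_gt0 e0 (ltr0n _ 2)).
have := hnormD (v0 - ks (maxn N1 N2)) (ks (maxn N1 N2) - k0).
rewrite addrA subrK.
have := (hks (maxn N1 N2)).2; have := hN1 _ (leq_maxl N1 N2); have := hN2 _ (leq_maxr N1 N2).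
set r := (maxn N1 N2).+1%:R^-1; lra.
Qed.

End ClosestPoint.

Section Representation.
Context {f : V -> R[i]}.
Hypothesis f_lin : forall a u v, f (a *: u + v) = a * f u + f v.
Hypothesis f_bounded : exists M, forall v, cmod (f v) <= M * hnm v.

Lemma kernel_closed (u : nat -> V) l : (forall m, f (u m) = 0) -> converges_to u l -> f l = 0.
Proof.
move=> fu0 ul; case: f_bounded => M hM.
apply: Normc.eq0_normc; apply/eqP; rewrite eq_le cmod_ge0 andbT.
apply/ler_addgt0Pr => e e0; rewrite add0r.
have M1 : 0 < `|M| + 1 by have := normr_ge0 M; lra.
have [N /(_ N (leqnn N))] := ul _ (divr_gt0 e0 M1); rewrite ltr_pdivlMr // => lt.
have -> : f l = - f (u N - l) by rewrite (lfunB f_lin) fu0 sub0r opprK.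
rewrite cmodN; apply: le_trans (hM _) _.
have := hnorm_ge0 (u N - l); have := ler_norm M; nra.
Qed.

Lemma riesz : exists y, forall v, f v = ip v y.
Proof.
have [f0|/existsNP [v0 /eqP fv0]] := pselect (forall v, f v = 0).
  by exists 0 => v; rewrite f0 ip0r.
set K := [set k | f k = 0].
have K_mid a b : K a -> K b -> K (midpoint a b).
  by rewrite /K /= (lfunZ f_lin) (lfunD f_lin) => -> ->; rewrite addr0 mulr0.
have [k0 Kk0 k0_min] := closest_point K_mid kernel_closed v0 (ex_intro _ 0 (lfun0 f_lin)).
set z := v0 - k0.
have fz : f z != 0 by rewrite (lfunB f_lin) Kk0 subr0.
exists (((nsq z)^-1%:C * (f z)^*)%C *: z); apply: orthogonal_kernel_repr => // k fk.
apply: min_norm_orthogonal => t; rewrite /z -addrA -opprD; apply: k0_min.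
by rewrite /K /= (lfunD f_lin) (lfunZ f_lin) Kk0 fk mulr0 addr0.
Qed.

End Representation.

Lemma rank1_outer {A} : bop ip A -> rank_le A 1 -> exists x y, A = outer ip x y.
Proof.
move=> hA /rank1P [w hw].
have [w0|/eqP w_nz] := eqVneq w 0.
  exists 0, 0; apply: funext => v; have [a ->] := hw v.
  by rewrite /outer w0 !scaler0.
set f := fun v => ip (A v) w * (nsq w)^-1%:C%C.
have Af v : A v = f v *: w.
  rewrite /f; have [a ->] := hw v; rewrite ipZl ip_real -mulrA -rmorphM /=.
  by rewrite mulfV ?mulr1 // gt_eqF ?nsq_gt0.
have f_lin a u v : f (a *: u + v) = a * f u + f v.
  by rewrite /f (bopZD hA) ipL mulrDl mulrA.
have f_bounded : exists M, forall v, cmod (f v) <= M * hnm v.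
  exists (opnorm ip A * hnm w * (nsq w)^-1) => v.
  rewrite /f cmodM cmod_real ger0_norm ?invr_ge0 ?nsq_ge0 // mulrAC.
  rewrite ler_wpM2r ?invr_ge0 ?nsq_ge0 //; apply: le_trans (cauchy_schwarz _ _) _.
  by rewrite mulrAC ler_wpM2r ?hnorm_ge0 ?opnorm_bound.
have [y hy] := riesz f_lin f_bounded.
by exists w, y; apply: funext => v; rewrite Af hy.
Qed.

End Riesz.

Section CNorm.
Context {n : nat} (hn : (0 < n)%N) {c : 'I_n -> R}.
Implicit Types A B : V -> V.

Local Notation c1 := (c (Ordinal hn)).
Local Notation N := (cnorm ip c).

Lemma cnorm_split A :
  N A = c1 * opnorm ip A + \sum_(j < n | j != Ordinal hn) c j * sv ip A j.
Proof. by rewrite /cnorm (bigD1 (Ordinal hn)) //= sv0. Qed.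

Lemma cnorm_delta A : (forall i : 'I_n, c i = if val i == 0%N then 1 else 0) ->
  N A = sv ip A 0.
Proof.
move=> cE; rewrite cnorm_split cE mul1r sv0 big1 ?addr0 // => j j_neq0.
by rewrite cE ifF ?mul0r //; apply: contraNF j_neq0 => /eqP j0; apply/eqP/val_inj.
Qed.

Lemma cnorm_rank1 A : bop ip A -> rank_le A 1 -> N A = c1 * opnorm ip A.
Proof.
move=> hA rA; rewrite cnorm_split big1 ?addr0 // => j j_neq0.
rewrite sv_rank ?mulr0 //; apply: rank1_le rA.
by rewrite lt0n; apply: contra j_neq0 => /eqP j0; apply/eqP/val_inj.
Qed.

Lemma cnorm_outer x y : N (outer ip x y) = c1 * (hnm x * hnm y).
Proof. by rewrite cnorm_rank1 ?opnorm_outer //; [apply: outer_bop | apply: outer_rank1]. Qed.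

Lemma cnorm_outer_comp x y u z :
  N (fun v => outer ip x y (outer ip u z v)) = c1 * (cmod (ip u y) * hnm x * hnm z).
Proof. by rewrite outer_comp cnorm_outer hnormZ mulrA. Qed.

Hypothesis c_ge0 : forall i, 0 <= c i.

Lemma cnorm_ge0 A : 0 <= N A.
Proof. by apply: sumr_ge0 => j _; rewrite mulr_ge0 ?sv_ge0. Qed.

Lemma cnorm_ge_opnorm A : c1 * opnorm ip A <= N A.
Proof.
by rewrite cnorm_split lerDl sumr_ge0 // => j _; rewrite mulr_ge0 ?sv_ge0.
Qed.

Lemma cnorm_ge_sv1 (h2 : (1 < n)%N) A :
  c1 * opnorm ip A + c (Ordinal h2) * sv ip A 1 <= N A.
Proof.
rewrite cnorm_split lerD2l (bigD1 (Ordinal h2)) ?lerDl //=.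
by rewrite sumr_ge0 // => j _; rewrite mulr_ge0 ?sv_ge0.
Qed.

Lemma cnorm_compl {A B} : bop ip A -> bop ip B ->
  N (fun v => A (B v)) <= opnorm ip A * N B.
Proof.
move=> hA hB; rewrite /cnorm mulr_sumr; apply: ler_sum => j _.
by rewrite mulrCA ler_wpM2l ?sv_compl.
Qed.

Lemma cnorm_compr {A B} : bop ip A -> bop ip B ->
  N (fun v => A (B v)) <= N A * opnorm ip B.
Proof.
move=> hA hB; rewrite /cnorm mulr_suml; apply: ler_sum => j _.
by rewrite -mulrA ler_wpM2l ?sv_compr.
Qed.

Lemma cnorm_submult_iff {e : V} : e <> 0 -> 0 < c1 ->
  (forall A B, bop ip A -> bop ip B -> N (fun v => A (B v)) <= N A * N B) <->
  1 <= c1.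
Proof.
move=> /hnorm_gt0 e_gt0 c1_gt0; split=> [submult | c1_ge1 A B hA hB].
  have := submult _ _ (outer_bop e e) (outer_bop e e).
  rewrite cnorm_outer_comp cmod_ip_self cnorm_outer.
  rewrite (_ : c1 * (hnm e * hnm e) * (c1 * (hnm e * hnm e)) =
    c1 * (hnm e ^+ 2 * hnm e * hnm e) * c1); last by ring.
  by rewrite ler_pMr // !mulr_gt0.
apply: le_trans (cnorm_compl hA hB) _; rewrite ler_wpM2r ?cnorm_ge0 //.
by apply: le_trans (cnorm_ge_opnorm A); rewrite ler_peMl ?opnorm_ge0.
Qed.

Lemma cnorm_cross_iff {e : V} : e <> 0 ->
  (forall A, bop ip A -> rank_one A -> N A = sv ip A 0) <-> c1 = 1.
Proof.
move=> e_nz; split=> [cross | c1_1 A hA [rA _]]; last first.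
  by rewrite cnorm_rank1 // c1_1 mul1r sv0.
have := cross _ (outer_bop e e) (conj (outer_rank1 e e) (outer_nonzero e_nz e_nz)).
rewrite cnorm_outer sv0 opnorm_outer -[X in _ = X]mul1r; apply: mulIf.
by rewrite mulf_neq0 // gt_eqF ?hnorm_gt0.
Qed.

Lemma cnorm_mult_eq_exists_iff {e : V} : e <> 0 -> 1 <= c1 ->
  (exists A B, [/\ bop ip A, bop ip B, nonzero_op A, nonzero_op B &
     N (fun v => A (B v)) = N A * N B]) <-> c1 = 1.
Proof.
move=> e_nz c1_ge1; split=> [[A [B [hA hB nA nB eqAB]]] | c1_1].
  have oA := opnorm_gt0 hA nA; have oB := opnorm_gt0 hB nB.
  have NB_gt0 : 0 < N B.
    by apply: lt_le_trans (cnorm_ge_opnorm B); rewrite mulr_gt0 // (lt_le_trans ltr01).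
  have := cnorm_compl hA hB; rewrite eqAB ler_pM2r // => NA_le.
  apply/eqP; rewrite eq_le c1_ge1 andbT -(ler_pM2r oA) mul1r.
  by apply: le_trans (cnorm_ge_opnorm A) NA_le.
exists (outer ip e e), (outer ip e e); split; try exact: outer_bop; try exact: outer_nonzero.
by rewrite cnorm_outer_comp cmod_ip_self cnorm_outer c1_1; ring.
Qed.

Section EqualityCase.
Variable h2 : (1 < n)%N.
Hypotheses (c1_1 : c1 = 1) (c2_gt0 : 0 < c (Ordinal h2)).

Lemma sv1_eq0_of_cnorm_le A : N A <= opnorm ip A -> sv ip A 1 = 0.
Proof.
move=> NA_le; have := cnorm_ge_sv1 h2 A; rewrite c1_1 mul1r => NA_ge.
apply/eqP; rewrite eq_le sv_ge0 andbT -(pmulr_rle0 _ c2_gt0); lra.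
Qed.

Hypothesis Hcomp : hcomplete ip.

Lemma cnorm_mult_eq_outer A B : bop ip A -> bop ip B -> nonzero_op A -> nonzero_op B ->
  N (fun v => A (B v)) = N A * N B <->
  exists x y z, [/\ x <> 0, y <> 0, z <> 0, A = outer ip x y & B = outer ip y z].
Proof.
move=> hA hB nA nB; split=> [eqAB | [x [y [z [_ _ _ -> ->]]]]]; last first.
  by rewrite cnorm_outer_comp !cnorm_outer c1_1 cmod_ip_self; ring.
have N_gt0 X : bop ip X -> nonzero_op X -> 0 < N X.
  move=> hX nX; apply: lt_le_trans (cnorm_ge_opnorm X).
  by rewrite c1_1 mul1r opnorm_gt0.
have svA : sv ip A 1 = 0.
  by apply: sv1_eq0_of_cnorm_le; have := cnorm_compl hA hB; rewrite eqAB ler_pM2r ?N_gt0.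
have svB : sv ip B 1 = 0.
  by apply: sv1_eq0_of_cnorm_le; have := cnorm_compr hA hB; rewrite eqAB ler_pM2l ?N_gt0.
have [x [y eqA]] := rank1_outer Hcomp hA (sv1_eq0_rank1 hA svA).
have [u [z eqB]] := rank1_outer Hcomp hB (sv1_eq0_rank1 hB svB).
move: nA nB eqAB; rewrite eqA eqB => /nonzero_outer [x_nz y_nz] /nonzero_outer [u_nz z_nz].
rewrite cnorm_outer_comp !cnorm_outer c1_1 !mul1r => eq_norms.
have cs_eq : cmod (ip u y) = hnm u * hnm y.
  apply: (mulIf (x := hnm x * hnm z)); first by rewrite mulf_neq0 ?gt_eqF ?hnorm_gt0.
  by rewrite mulrA eq_norms; ring.
have u_eq := cauchy_schwarz_eq y_nz cs_eq; set t := pcoef u y in u_eq.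
have t_nz : t != 0 by apply/eqP => t0; apply: u_nz; rewrite u_eq t0 scale0r.
exists x, y, (t^* *: z); split=> //; last by rewrite u_eq outerZl.
by apply/eqP; rewrite scaler_eq0 conjC_eq0 negb_or t_nz; apply/eqP.
Qed.

End EqualityCase.

End CNorm.

End InnerProduct.

Lemma hdim_ge_nonzero {R : realType} {V : lmodType R[i]} {n : nat} :
  (0 < n)%N -> hdim_ge V n -> exists e : V, e <> 0.
Proof.
move=> hn [w w_free]; exists (w (Ordinal hn)) => w0.
set a := fun i : 'I_n => (i == Ordinal hn)%:R : R[i].
suff /(_ (Ordinal hn)) : forall i, a i = 0 by rewrite /a eqxx => /eqP; rewrite oner_eq0.
apply: w_free; rewrite (bigD1 (Ordinal hn)) //= w0 scaler0 add0r big1 // => i.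
by rewrite /a => /negPf ->; rewrite scale0r.
Qed.

Theorem corollary2p7 (R : realType) (V : lmodType R[i]) (ip : V -> V -> R[i])
  (Hip : inner_product ip) (Hcomp : hcomplete ip)
  (n : nat) (hn : (0 < n)%N) (Hdim : hdim_ge V n) (c : 'I_n -> R) :
  let c1 := c (Ordinal hn) in
  let desc_pos := (forall i j : 'I_n, (i <= j)%N -> c j <= c i) /\
                  (forall i : 'I_n, 0 < c i) in
  let N := cnorm ip c in
  (* (a) *)
  (desc_pos ->
     ((forall A B : V -> V, bop ip A -> bop ip B ->
         N (fun v => A (B v)) <= N A * N B) <-> 1 <= c1)) /\
  (* (b) *)
  (desc_pos ->
     ((forall A : V -> V, bop ip A -> rank_one A -> N A = sv ip A 0) <-> c1 = 1)) /\
  (* (c) *)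
  (desc_pos -> 1 <= c1 ->
     ((exists A B : V -> V, [/\ bop ip A, bop ip B, nonzero_op A, nonzero_op B &
         N (fun v => A (B v)) = N A * N B]) <-> c1 = 1)) /\
  (* (d) *)
  ((forall i : 'I_n, c i = if val i == 0%N then 1 else 0) ->
     forall A B : V -> V, bop ip A -> bop ip B -> nonzero_op A -> nonzero_op B ->
       (N (fun v => A (B v)) = N A * N B <->
        sv ip (fun v => A (B v)) 0 = sv ip A 0 * sv ip B 0)) /\
  (* (e) *)
  (forall h2 : (1 < n)%N, desc_pos -> c1 = 1 -> 0 < c (Ordinal h2) ->
     forall A B : V -> V, bop ip A -> bop ip B -> nonzero_op A -> nonzero_op B ->
       (N (fun v => A (B v)) = N A * N B <->
        exists x y z : V, [/\ x <> 0, y <> 0, z <> 0,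
          A = outer ip x y & B = outer ip y z])).
Proof.
move=> c1 desc_pos N.
have [e e_nz] := hdim_ge_nonzero hn Hdim.
have c_ge0 : desc_pos -> forall i, 0 <= c i by move=> [_ c_gt0] i; apply: ltW.
split; [|split; [|split; [|split]]].
- by move=> dp; apply: (cnorm_submult_iff Hip hn (c_ge0 dp) e_nz (dp.2 _)).
- by move=> _; apply: (cnorm_cross_iff Hip hn e_nz).
- by move=> dp; apply: (cnorm_mult_eq_exists_iff Hip hn (c_ge0 dp) e_nz).
- by move=> cE A B _ _ _ _; rewrite /N !(cnorm_delta Hip hn _ cE).
- move=> h2 dp c1_1 c2_gt0.
  exact: (cnorm_mult_eq_outer Hip hn (c_ge0 dp) h2 c1_1 c2_gt0 Hcomp).
Qed.
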